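(* Let $k$ be a field, $\mathsf{E}$ a left strictly locally finite $k$-linear category, and suppose a standard frontier $X_y$ has been chosen for every object $y$. Then for every object $y\in\mathsf{E}$ and every integer $n\ge1$, the degree $n$ standard frontier $X_y^{(n)}$ is a frontier for $y$.
   Context: A small $k$-linear category $\mathsf{E}$ has $k$-vector spaces $\operatorname{Hom}_\mathsf{E}(x,y)$, $k$-bilinear associative composition and identities with $\mathrm{id}_x\ne0$. Write $x\preceq y$ if there are $n\ge1$ and objects $x=z_0,\dots,z_n=y$ with $\operatorname{Hom}_\mathsf{E}(z_{i-1},z_i)\neq0$ for all $i$; $x\prec y$ means $x\preceq y$ and not $y\preceq x$. $\mathsf{E}$ is locally finite if all Hom spaces are finite-dimensional and every $\{z:x\preceq z\preceq y\}$ is finite. A finite set of objects $X$ with $x\prec y$ for all $x\in X$ is a frontier for $y$ if there is a finite set of objects $W$ such that every morphism $f:z\to y$ with $z\prec y$ and $z\notin W$ can be written $f=\sum_{i=1}^nh_ig_i$ ($n\ge0$) with $g_i:z\to x_i$, $h_i:x_i\to y$, $x_i\in X$. $\mathsf{E}$ is left strictly locally finite if it is locally finite and every object $y$ has a frontier with $W=\emptyset$; a chosen such frontier $X_y$ (for each $y$) is called the standard frontier of $y$. Define $X_y^{(1)}=X_y$ and $X_y^{(n+1)}=\bigcup_{z\in X_y^{(n)}}X_z$. *)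

From HB Require Import structures.
From mathcomp Require Import all_boot all_algebra.
From Stdlib Require List.

Set Implicit Arguments.
Unset Strict Implicit.
Unset Printing Implicit Defensive.

Import GRing.Theory.
Local Open Scope ring_scope.

Record klinCat (k : fieldType) := KLinCat {
  Obj : Type;
  Hom : Obj -> Obj -> lmodType k;
  comp : forall x y z : Obj, Hom y z -> Hom x y -> Hom x z;
  idm : forall x : Obj, Hom x x;
  comp_linear_r : forall (x y z : Obj) (h : Hom y z) (a : k) (g1 g2 : Hom x y),
      comp h (a *: g1 + g2) = a *: comp h g1 + comp h g2;
  comp_linear_l : forall (x y z : Obj) (g : Hom x y) (a : k) (h1 h2 : Hom y z),
      comp (a *: h1 + h2) g = a *: comp h1 g + comp h2 g;
  comp_assoc : forall (w x y z : Obj) (h : Hom y z) (g : Hom x y) (f : Hom w x),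
      comp h (comp g f) = comp (comp h g) f;
  comp_id_l : forall (x y : Obj) (f : Hom x y), comp (idm y) f = f;
  comp_id_r : forall (x y : Obj) (f : Hom x y), comp f (idm x) = f;
  idm_neq0 : forall x : Obj, idm x != 0
}.

Section Defs.
Variables (k : fieldType) (E : klinCat k).
Local Notation Obj := (Obj E).
Local Notation Hom := (@Hom k E).
Local Notation comp := (@comp k E _ _ _).

Definition nonzeroHom (x y : Obj) : Prop := exists f : Hom x y, f != 0.

Inductive preceq : Obj -> Obj -> Prop :=
  | preceq_step : forall x y, nonzeroHom x y -> preceq x y
  | preceq_cons : forall x y z, nonzeroHom x y -> preceq y z -> preceq x z.

Definition prec (x y : Obj) : Prop := preceq x y /\ ~ preceq y x.

Definition findim (V : lmodType k) : Prop :=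
  exists s : seq V, forall v : V,
    exists c : 'I_(size s) -> k, v = \sum_(i < size s) c i *: s`_i.

Definition locally_finite : Prop :=
  (forall x y : Obj, findim (Hom x y)) /\
  (forall x y : Obj, exists s : list Obj,
      forall z, preceq x z -> preceq z y -> List.In z s).

Definition frontier_with (y : Obj) (X W : list Obj) : Prop :=
  (forall x, List.In x X -> prec x y) /\
  (forall (z : Obj), prec z y -> ~ List.In z W ->
     forall f : Hom z y,
       exists l : seq {x : Obj & (Hom z x * Hom x y)%type},
         (forall p, List.In p l -> List.In (projT1 p) X) /\
         f = \sum_(p <- l) comp (projT2 p).2 (projT2 p).1).

Definition frontier (y : Obj) (X : list Obj) : Prop :=
  exists W : list Obj, frontier_with y X W.

(* degree n standard frontier: X^(1) = X y, X^(n+1) = union_{z in X^(n)} X z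
   (degree 0 is unused and set to the empty list) *)
Fixpoint std_frontier_deg (X : Obj -> list Obj) (y : Obj) (n : nat) : list Obj :=
  match n with
  | O => nil
  | S O => X y
  | S m => List.flat_map X (std_frontier_deg X y m)
  end.

End Defs.

From Pilot Require Import Defs.
From mathcomp Require Import all_boot all_algebra.
From Stdlib Require List.

(* If [f : z -> y] factors through [X^(n)] and [z] avoids the finitely many
   objects [u] with [x ≼ u ≼ x] for some [x] in [X^(n)], then every nonzero
   component [g : z -> x] of the factorization has [z ≺ x], hence factors
   through the standard frontier [X x] with no exceptions; composing these
   factorizations shows that [f] factors through [X^(n+1)]. *)

Set Implicit Arguments.
Unset Strict Implicit.
Unset Printing Implicit Defensive.
Import GRing.Theory.
Local Open Scope ring_scope.

Section Frontiers.
Variables (k : fieldType) (E : klinCat k).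
Local Notation Ob := (Defs.Obj E).
Local Notation Hm := (@Defs.Hom k E).
Local Notation cmp := (@Defs.comp k E _ _ _).

Lemma preceq_trans (x y z : Ob) : preceq x y -> preceq y z -> preceq x z.
Proof.
elim=> [a b Hab|a b c Hab _ IH] Hz; first exact: preceq_cons Hab Hz.
exact: preceq_cons Hab (IH Hz).
Qed.

Lemma prec_trans (x y z : Ob) : prec x y -> prec y z -> prec x z.
Proof.
move=> [xy yNx] [yz zNy]; split; first exact: preceq_trans xy yz.
by move=> zx; apply: yNx; apply: preceq_trans yz zx.
Qed.

Lemma preceq_hom (x y : Ob) (f : Hm x y) : f != 0 -> preceq x y.
Proof. by move=> f_neq0; apply: preceq_step; exists f. Qed.

Lemma compDr (x y z : Ob) (h : Hm y z) (a b : Hm x y) :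
  cmp h (a + b) = cmp h a + cmp h b.
Proof. by have := comp_linear_r h 1 a b; rewrite !scale1r. Qed.

Lemma comp0r (x y z : Ob) (h : Hm y z) : cmp h (0 : Hm x y) = 0.
Proof. by apply: (addrI (cmp h 0)); rewrite -compDr !addr0. Qed.

Lemma comp_sumr (w x y : Ob) (h : Hm x y) (I : Type) (s : seq I)
    (F : I -> Hm w x) :
  cmp h (\sum_(i <- s) F i) = \sum_(i <- s) cmp h (F i).
Proof.
elim: s => [|i s IHs]; first by rewrite !big_nil comp0r.
by rewrite !big_cons compDr IHs.
Qed.

Definition factors_through (X : list Ob) (z y : Ob) (f : Hm z y) : Prop :=
  exists l : seq {x : Ob & (Hm z x * Hm x y)%type},
    (forall p, List.In p l -> List.In (projT1 p) X) /\
    f = \sum_(p <- l) cmp (projT2 p).2 (projT2 p).1.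

Section FactorsThrough.
Variables (X : list Ob) (z y : Ob).

Lemma factors_through0 : factors_through X (0 : Hm z y).
Proof. by exists nil; rewrite big_nil. Qed.

Lemma factors_throughD (f1 f2 : Hm z y) :
  factors_through X f1 -> factors_through X f2 -> factors_through X (f1 + f2).
Proof.
move=> [l1 [l1X ->]] [l2 [l2X ->]]; exists (l1 ++ l2); rewrite big_cat.
split=> // p /(List.in_app_or l1) [/l1X|/l2X] //.
Qed.

Lemma factors_through_sum (I : Type) (s : seq I) (F : I -> Hm z y) :
  (forall i, List.In i s -> factors_through X (F i)) ->
  factors_through X (\sum_(i <- s) F i).
Proof.
elim: s => [|i s IHs] sX; first by rewrite big_nil; apply: factors_through0.
rewrite big_cons; apply: factors_throughD; first by apply: sX; left.
by apply: IHs => j js; apply: sX; right.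
Qed.

Lemma factors_through_compl (x : Ob) (h : Hm y x) (g : Hm z y) :
  factors_through X g -> factors_through X (cmp h g).
Proof.
move=> [l [lX ->]].
exists [seq existT (fun u => (Hm z u * Hm u x)%type) (projT1 p)
          ((projT2 p).1, cmp h (projT2 p).2) | p <- l]; split.
  by move=> q /List.in_map_iff [p [<- pl]]; apply: lX.
rewrite big_map comp_sumr; apply: eq_bigr => p _; exact: comp_assoc.
Qed.

Lemma factors_through_subset (X' : list Ob) (f : Hm z y) :
  (forall x, List.In x X -> List.In x X') ->
  factors_through X f -> factors_through X' f.
Proof. by move=> XX' [l [lX ->]]; exists l; split=> // p /lX /XX'. Qed.

End FactorsThrough.

Lemma locally_finite_loops (L : list Ob) : locally_finite E ->
  exists W : list Ob, forall x u, List.In x L -> preceq x u -> preceq u x ->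
    List.In u W.
Proof.
move=> [_ intervals_finite]; elim: L => [|x L [W LW]]; first by exists nil.
have [s xs] := intervals_finite x x.
exists (s ++ W) => x' u /= [<-|x'L] x'u ux'; apply/List.in_or_app.
  by left; apply: xs.
by right; apply: LW x'L x'u ux'.
Qed.

Lemma frontier_with_flat_map (X : Ob -> list Ob) (y : Ob) (Y W W' : list Ob) :
  (forall x, frontier_with x (X x) nil) ->
  frontier_with y Y W ->
  (forall x u, List.In x Y -> preceq x u -> preceq u x -> List.In u W') ->
  frontier_with y (List.flat_map X Y) (W ++ W').
Proof.
move=> HX [Yy Yfactors] YW'; split.
  move=> x /List.in_flat_map [x' [x'Y xx']].
  exact: prec_trans ((HX x').1 x xx') (Yy x' x'Y).
move=> z zy zNW f.
have zNW1 : ~ List.In z W by move=> zW; apply: zNW; apply: List.in_or_app; left.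
have [l [lY ->]] := Yfactors z zy zNW1 f.
apply: factors_through_sum => -[x [g h]] /lY /= xY.
have [->|g_neq0] := eqVneq g 0; first by rewrite comp0r; apply: factors_through0.
have zx : prec z x.
  split=> [|xz]; first exact: preceq_hom g_neq0.
  by apply: zNW; apply: List.in_or_app; right; apply: YW' xY xz (preceq_hom g_neq0).
apply: factors_through_compl; apply: factors_through_subset ((HX x).2 z zx id g).
by move=> u ux; apply/List.in_flat_map; exists x.
Qed.

End Frontiers.

Theorem lemma4p6 (k : fieldType) (E : klinCat k)
    (HLF : locally_finite E)
    (X : Obj E -> list (Obj E))
    (HX : forall y : Obj E, frontier_with y (X y) nil) :
  forall (y : Obj E) (n : nat), (1 <= n)%N -> frontier y (std_frontier_deg X y n).
Proof.
move=> y [//|m] _; elim: m => [|m [W HW]]; first by exists nil; apply: HX.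
have [W' loopsW'] := locally_finite_loops (std_frontier_deg X y m.+1) HLF.
by exists (W ++ W'); apply: frontier_with_flat_map HW loopsW'.
Qed.
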